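(* Let $T$ be a tree rooted at a vertex $v$ and let $\bar T$ be a pruning of $T$ (as defined in the context). Then for every maximum dissociation set $\bar F$ of $\bar T$ there exists a maximum dissociation set $F$ of $T$ such that $v\in F$ if and only if $v\in \bar F$. Conversely, for every maximum dissociation set $F$ of $T$ there exists a maximum dissociation set $\bar F$ of $\bar T$ such that $v\in \bar F$ if and only if $v\in F$.
   Context: All graphs are finite, simple and undirected. A dissociation set of a graph $G$ is a set $F\subseteq V(G)$ such that $G[F]$ has maximum degree at most $1$; a maximum dissociation set is one of maximum cardinality. In a rooted tree, for a vertex $u$, $C(u)$ is the set of children of $u$, $D[u]$ is the set consisting of $u$ and all its descendants, and $T_u$ is the subtree induced by $D[u]$. A branch vertex is a vertex of degree at least $3$. Pruning: let $T$ be rooted at $v$. While the current tree has a branch vertex different from $v$, choose such a branch vertex $u\ne v$ at maximum distance from $v$; then every proper descendant of $u$ has degree at most $2$, so for each child $w$ of $u$ the subtree $T_w$ is a path with end vertex $w$, and for $i\in\{0,1,2\}$ let $C^i(u)$ be the set of children $w$ of $u$ such that $|V(T_w)|\equiv i \pmod 3$. Perform the following step (a pruning at $u$): if $|C^2(u)|\ge 1$ or $|C^1(u)|\ge 2$, delete all vertices of $D[u]$; if $|C^2(u)|=0$ and $|C^1(u)|\le 1$, delete all vertices of $D[w]$ for every $w\in C(u)\setminus\{z\}$, where $z$ is the unique vertex of $C^1(u)$ if $|C^1(u)|=1$ and $z$ is an arbitrary child of $u$ otherwise. When no branch vertex other than $v$ remains, the resulting tree $\bar T$ (rooted at $v$,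 in which every vertex other than $v$ has degree at most $2$) is called a pruning of $T$. *)

From mathcomp Require Import all_boot.
Set Implicit Arguments.
Unset Strict Implicit.
Unset Printing Implicit Defensive.

(* A finite simple graph is a symmetric irreflexive relation [e] on a finType.
   Subgraphs considered are induced subgraphs G[S] for S : {set T}. *)
Section Defs.
Variable T : finType.
Variable e : rel T.

Definition adj (S : {set T}) : rel T := fun x y => [&& x \in S, y \in S & e x y].

Definition connected_in (S : {set T}) : Prop :=
  forall x y, x \in S -> y \in S -> connect (adj S) x y.

Definition acyclic_in (S : {set T}) : Prop :=
  forall c : seq T, uniq c -> 2 < size c -> {subset c <= S} -> ~~ cycle e c.

Definition is_tree (S : {set T}) : Prop :=
  S != set0 /\ connected_in S /\ acyclic_in S.

Definition deg (S : {set T}) (x : T) : nat := #|[set y in S | e x y]|.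

Definition branch (S : {set T}) (x : T) : bool := (x \in S) && (2 < deg S x).

(* D[u] in the tree G[S] rooted at v: the vertices w of S such that u lies on
   the v-w path, i.e. w is not joined to v in G[S \ u]. *)
Definition desc (S : {set T}) (v u : T) : {set T} :=
  [set w in S | ~~ ((v \in S :\ u) && connect (adj (S :\ u)) v w)].

Definition children (S : {set T}) (v u : T) : {set T} :=
  [set w in desc S v u | e u w && (w != u)].

Definition is_dist (S : {set T}) (x y : T) (n : nat) : Prop :=
  (exists p, [/\ path (adj S) x p, last x p = y & size p = n]) /\
  (forall p, path (adj S) x p -> last x p = y -> n <= size p).

Definition Cmod (S : {set T}) (v u : T) (i : nat) : {set T} :=
  [set w in children S v u | #|desc S v w| %% 3 == i].

Definition prune_at (S : {set T}) (v u : T) (S' : {set T}) : Prop :=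
  if (0 < #|Cmod S v u 2|) || (1 < #|Cmod S v u 1|) then S' = S :\: desc S v u
  else exists2 z, z \in children S v u &
        (Cmod S v u 1 = [set z] \/ Cmod S v u 1 = set0) /\
        S' = S :\: \bigcup_(w in children S v u :\ z) desc S v w.

Definition prune_step (v : T) (S S' : {set T}) : Prop :=
  exists u, [/\ branch S u, u != v,
    (forall w n m, branch S w -> w != v -> is_dist S v w n -> is_dist S v u m -> n <= m)
    & prune_at S v u S'].

Inductive pruning (v : T) : {set T} -> {set T} -> Prop :=
| pruning_done S : (forall u, u != v -> ~~ branch S u) -> pruning v S S
| pruning_step S S1 S2 : prune_step v S S1 -> pruning v S1 S2 -> pruning v S S2.

Definition dissociation (S F : {set T}) : bool :=
  (F \subset S) && [forall x in F, #|[set y in F | e x y]| <= 1].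

Definition max_dissociation (S F : {set T}) : Prop :=
  dissociation S F /\ forall F', dissociation S F' -> #|F'| <= #|F|.

End Defs.

(* Call S ⊇ S1 (both containing v) root-equivalent when maximum dissociation
   sets of G[S1] and of G[S] can be transported to each other preserving
   membership of v.  This relation is reflexive and transitive, so by induction
   on the pruning it suffices to treat one pruning at a deepest branch vertex
   u != v, checking also that the remaining graph is again a tree rooted at v.

   For one pruning step we use an exchange lemma: if the deleted part contains
   a dissociation set G without edges to the kept part and at least as large
   as the deleted part of any dissociation set, then the kept set is
   root-equivalent to the original one.  The deleted subtrees T_w (w a child of
   u) are paths, so G is taken to be a union of optimal dissociation sets of
   these paths: a path on n vertices has dissociation number n - n/3, attained
   by a pattern that avoids the first vertex w when n = 0 mod 3.  When u itself
   is deleted, the residues of the child paths mod 3 give the one extra vertex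
   needed to compensate for u. *)
From mathcomp Require Import all_boot.
From mathcomp Require Import zify.
Set Implicit Arguments.
Unset Strict Implicit.
Unset Printing Implicit Defensive.

Section InducedPaths.
Variables (T : finType) (e : rel T).
Hypothesis esym : symmetric e.
Hypothesis eirr : irreflexive e.

Lemma adj_sym (A : {set T}) : symmetric (adj e A).
Proof. by move=> x y; rewrite /adj esym; case: (x \in A); case: (y \in A). Qed.

Lemma edge_neq x y : e x y -> x != y.
Proof. by apply: contraTneq => ->; rewrite eirr. Qed.

Lemma path_in (A : {set T}) x (p : seq T) :
  x \in A -> path (adj e A) x p -> all (mem A) (x :: p).
Proof.
elim: p x => [|y p IH] x xA /=; first by rewrite xA.
by case/andP=> /and3P[_ yA _] /(IH _ yA) /= ->; rewrite xA.
Qed.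

Lemma connect_in (A : {set T}) a b : a \in A -> connect (adj e A) a b -> b \in A.
Proof. by move=> aA /connectP[p /(path_in aA) /allP pA ->]; apply: pA; apply: mem_last. Qed.

Lemma last_path_in (A : {set T}) x (p : seq T) :
  path (adj e A) x p -> p != [::] -> last x p \in A.
Proof. by case/lastP: p => // q y; rewrite rcons_path last_rcons => /andP[_ /and3P[]]. Qed.

Lemma path_edges (A : {set T}) x p : path (adj e A) x p -> path e x p.
Proof. by apply: sub_path => a b /and3P[]. Qed.

Lemma path_adj_mono (A B : {set T}) x p :
  {subset A <= B} -> path (adj e A) x p -> path (adj e B) x p.
Proof.
by move=> AB; apply: sub_path => a b /and3P[aA bA ab]; rewrite /adj (AB _ aA) (AB _ bA).
Qed.

Lemma path_avoid (A : {set T}) c x (p : seq T) :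
  x \in A -> c \notin x :: p -> path (adj e A) x p -> path (adj e (A :\ c)) x p.
Proof.
move=> xA cp pp; have /allP pA := path_in xA pp.
apply: (@sub_in_path _ [pred y | (y \in A) && (y != c)] (adj e A)); last by [].
  move=> a b; rewrite !inE /adj !inE => /andP[-> ->] /andP[-> ->] /and3P[_ _ ->].
  by rewrite !andbT.
apply/allP=> y yp; have yA : y \in A := pA y yp.
rewrite inE /= yA; by apply: contraNneq cp => <-.
Qed.

Lemma path_last_step (A : {set T}) a q b : a \in A -> path (adj e A) a q ->
  uniq (a :: q) -> last a q = b -> a != b ->
  exists2 p, p \in A & connect (adj e (A :\ b)) a p && e p b.
Proof.
move=> aA; case/lastP: q => [|q y]; first by move=> _ _ /= ->; rewrite eqxx.
rewrite last_rcons rcons_path => /andP[pq ady] U yb ab; subst b.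
have bq : y \notin a :: q by move: U; rewrite -rcons_cons rcons_uniq => /andP[].
have /allP qA := path_in aA pq.
exists (last a q); first by apply: qA; apply: mem_last.
move: ady => /and3P[_ _ ->]; rewrite andbT.
by apply/connectP; exists q => //; apply: path_avoid.
Qed.

Lemma dissociation_cherry (S F : {set T}) : dissociation e S F ->
  forall y a b, y \in F -> a \in F -> b \in F -> a != b -> e y a -> e y b -> False.
Proof.
move=> /andP[_ /forall_inP dF] y a b yF aF bF ab ea eb.
have /card_le1_eqP/(_ a b) := dF y yF.
by rewrite !inE aF bF ea eb => /(_ isT isT) abe; rewrite abe eqxx in ab.
Qed.

End InducedPaths.

Lemma card3 (T : finType) (a b c : T) : a != b -> a != c -> b != c -> #|[set a; b; c]| = 3.
Proof.
move=> ab ac bc; rewrite -setUA cardsU1 cards2 !inE.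
by rewrite (negbTE ab) (negbTE ac) bc.
Qed.

Lemma card_enum (T : finType) (B : {set T}) s : uniq s -> s =i B -> #|B| = size s.
Proof. by move=> U ms; move/card_uniqP: U => <-; apply: eq_card => y; rewrite ms. Qed.

Lemma card_enumI (T : finType) (F B : {set T}) s :
  uniq s -> s =i B -> #|F :&: B| = count (mem F) s.
Proof.
move=> U ms; rewrite -size_filter; move/card_uniqP: (filter_uniq (mem F) U) => <-.
by apply: eq_card => y; rewrite in_setI mem_filter ms.
Qed.

Lemma card_cover_sum (T : finType) (D : T -> {set T}) (W A : {set T}) :
  (forall w1 w2 y, w1 \in W -> w2 \in W -> w1 != w2 -> y \in D w1 -> y \in D w2 -> False) ->
  (forall y, y \in A -> exists2 w, w \in W & y \in D w) ->
  #|A| = \sum_(w in W) #|A :&: D w|.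
Proof.
move=> disj cov.
have one y : y \in A -> \sum_(w in W) (y \in D w : nat) = 1.
  move=> yA; have [w0 w0W yw0] := cov y yA.
  rewrite (bigD1 w0) //= yw0 big1 // => w /andP[wW ww0].
  by case yw : (y \in D w) => //; exfalso; apply: (disj w w0 y).
rewrite -sum1_card (eq_bigr (fun y => \sum_(w in W) (y \in D w : nat))); last first.
  by move=> y yA; rewrite one.
rewrite exchange_big /=; apply: eq_bigr => w _.
rewrite -sum1_card (big_mkcond (fun y => y \in A :&: D w)) /= big_mkcond /=.
by apply: eq_bigr => y _; rewrite in_setI; case: (y \in A); case: (y \in D w).
Qed.

Lemma sum_gain (T : finType) (W : {set T}) (a b : T -> nat) w0 :
  w0 \in W -> 1 + a w0 <= b w0 -> (forall w, w \in W -> a w <= b w) ->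
  1 + \sum_(w in W) a w <= \sum_(w in W) b w.
Proof.
move=> w0W h0 h; rewrite (bigD1 w0) // (bigD1 w0 (F := b)) //= addnA.
by apply: leq_add => //; apply: leq_sum => w /andP[wW _]; apply: h.
Qed.

(* A path on n vertices has dissociation number
   [path_diss n] = n - n/3: every dissociation set meets each window of three
   consecutive vertices in at most two of them, and the pattern that skips the
   vertices at distance 0 mod 3 from the far end attains the bound. *)
Definition path_diss (n : nat) : nat := n - n %/ 3.

Section PathBound.
Variables (T : finType) (e : rel T).
Hypothesis esym : symmetric e.
Hypothesis eirr : irreflexive e.

Lemma path_count_bound (F : pred T) (s : seq T) : uniq s -> sorted e s ->
  (forall y a b, F y -> F a -> F b -> a != b -> e y a -> e y b -> False) ->
  count F s <= path_diss (size s).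
Proof.
move=> + + cherry; rewrite /path_diss.
elim: {s}_.+1 {-2}s (ltnSn (size s)) => // n IH [|a [|b [|c t]]] lt U so //=.
- by case: (F a).
- by case: (F a); case: (F b).
move: so => /= /and3P[eab ebc pt].
have Ut : uniq t by move: U => /= /and4P[_ _ _ ->].
have ac : a != c by apply: contraTneq U => ->; rewrite /= !inE eqxx !orbT.
have lt_t : size t < n by move: lt => /=; lia.
have ct := IH t lt_t Ut (path_sorted pt).
have window : F a + F b + F c <= 2.
  case Fa : (F a); case Fb : (F b); case Fc : (F c) => //.
  by exfalso; apply: (cherry b a c) => //; rewrite esym.
lia.
Qed.

(* [chordless s]: each vertex of s is adjacent, among the later vertices of s,
   at most to its successor; this holds for the vertex sequence of a pendant
   path of a tree. *)
Fixpoint chordless (s : seq T) : Prop :=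
  if s is x :: t then (forall y, y \in t -> e x y -> y = head x t) /\ chordless t
  else True.

Fixpoint pattern (s : seq T) : seq T :=
  if s is x :: t then (if size s %% 3 != 0 then x :: pattern t else pattern t) else [::].

Lemma pattern_sub s : {subset pattern s <= s}.
Proof.
elim: s => //= x t IH y; case: ifP => _; rewrite ?inE.
  by case/orP => [->|/IH ->] //; rewrite orbT.
by move/IH ->; rewrite orbT.
Qed.

Lemma pattern_uniq s : uniq s -> uniq (pattern s).
Proof.
elim: s => //= x t IH /andP[xt ut]; case: ifP => _ //=; last exact: IH.
by rewrite IH // andbT; apply: contra xt; apply: pattern_sub.
Qed.

Lemma size_pattern s : size (pattern s) = path_diss (size s).
Proof.
rewrite /path_diss; elim: s => //= x t IH; case: ifP => /=; rewrite ?IH.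
  by move=> /eqP h; lia.
by move=> /negbFE /eqP h; lia.
Qed.

Lemma pattern_head x t : uniq (x :: t) -> x \in pattern (x :: t) -> size (x :: t) %% 3 != 0.
Proof.
by move=> /= /andP[xt _]; case: ifP => // _ /pattern_sub; rewrite (negbTE xt).
Qed.

Lemma pattern_behead y x t : y \in pattern (x :: t) -> y != x -> y \in pattern t.
Proof. by rewrite /=; case: ifP => // _; rewrite inE => /orP[/eqP ->|]; rewrite ?eqxx. Qed.

(* The head x of a chordless sequence cannot be one end of a cherry y-x, y-b
   of the pattern: y and b would be the next two vertices, and three
   consecutive vertices are never all kept. *)
Lemma pattern_no_cherry_at_head x t y b : uniq (x :: t) -> chordless (x :: t) ->
  y \in pattern (x :: t) -> x \in pattern (x :: t) -> b \in pattern (x :: t) ->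
  b != x -> e y x -> e y b -> False.
Proof.
move=> U [Hx It] yP xP bP bx eyx eyb.
have yx : y != x by apply: contraTneq eyx => ->; rewrite eirr.
have {yP} yP' := pattern_behead yP yx; have yt : y \in t := pattern_sub yP'.
case: t => [|c t'] // in U Hx It xP yP' bP yt *.
have yc : y = c by apply: Hx; rewrite // esym.
subst y; case: It => Hc It'; clear Hx yt.
have bc : b != c by apply: contraTneq eyb => ->; rewrite eirr.
have {bP} bP2 := pattern_behead (pattern_behead bP bx) bc.
have bt' : b \in t' := pattern_sub bP2.
case: t' => [|c' t''] // in U Hc It' xP yP' bP2 bt' *.
have bc' : b = c' := Hc b bt' eyb.
subst b.
have Ut : uniq (c :: c' :: t'') by case/andP: U.
have Ut' : uniq (c' :: t'') by case/andP: Ut.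
move: (pattern_head U xP) (pattern_head Ut yP') (pattern_head Ut' bP2).
move=> /= /eqP h1 /eqP h2 /eqP h3; move: (size t'') h1 h2 h3 => k.
by rewrite -[k.+3]addn3 -[k.+2]addn2 -[k.+1]addn1 => h1 h2 h3; lia.
Qed.

Lemma pattern_no_cherry s : uniq s -> chordless s ->
  forall y a b, y \in pattern s -> a \in pattern s -> b \in pattern s ->
  a != b -> e y a -> e y b -> False.
Proof.
elim: s => // x t IH U [Hx It] y a b yP aP bP ab eya eyb.
have Ut : uniq t by case/andP: U.
case ax : (a == x).
  by move/eqP: ax => ax; subst a; apply: (pattern_no_cherry_at_head U _ yP aP bP _ eya eyb);
    rewrite // eq_sym.
case bx : (b == x).
  by move/eqP: bx => bx; subst b; apply: (pattern_no_cherry_at_head U _ yP bP aP _ eyb eya).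
case yx : (y == x).
  move/eqP: yx => yx; subst y.
  have ha := Hx a (pattern_sub (pattern_behead aP (negbT ax))) eya.
  have hb := Hx b (pattern_sub (pattern_behead bP (negbT bx))) eyb.
  by rewrite ha hb eqxx in ab.
exact: (IH Ut It y a b (pattern_behead yP (negbT yx)) (pattern_behead aP (negbT ax))
  (pattern_behead bP (negbT bx)) ab eya eyb).
Qed.

End PathBound.

(* The conclusion of Lemma 3.1 is exactly
   [root_equiv e v [set: T] Tbar]. *)
Definition root_equiv (T : finType) (e : rel T) (v : T) (S S1 : {set T}) : Prop :=
  (forall Fb, max_dissociation e S1 Fb ->
     exists F, max_dissociation e S F /\ (v \in F <-> v \in Fb)) /\
  (forall F, max_dissociation e S F ->
     exists Fb, max_dissociation e S1 Fb /\ (v \in Fb <-> v \in F)).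

Section Exchange.
Variables (T : finType) (e : rel T) (v : T).
Hypothesis esym : symmetric e.

Lemma root_equiv_refl S : root_equiv e v S S.
Proof. by split => F mF; exists F. Qed.

Lemma root_equiv_trans S1 S2 S3 :
  root_equiv e v S1 S2 -> root_equiv e v S2 S3 -> root_equiv e v S1 S3.
Proof.
move=> [h1 h2] [h3 h4]; split.
  move=> F3 /h3 [F2 [m2 i2]]; have [F1 [m1 i1]] := h1 _ m2; exists F1; split => //; tauto.
move=> F1 /h2 [F2 [m2 i2]]; have [F3 [m3 i3]] := h4 _ m2; exists F3; split => //; tauto.
Qed.

Lemma dissociation_union (S S1 F' G : {set T}) : S1 \subset S -> G \subset S ->
  (forall x, x \in G -> #|[set y in G | e x y]| <= 1) ->
  (forall x y, x \in G -> y \in S1 -> ~~ e x y) ->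
  dissociation e S1 F' -> dissociation e S (F' :|: G).
Proof.
move=> S1S GS Gdiss Gsep /andP[F'S1 /forall_inP dF']; apply/andP; split.
  by rewrite subUset (subset_trans F'S1 S1S) GS.
apply/forall_inP => x; rewrite in_setU => /orP[xF|xG].
  have -> : [set y in F' :|: G | e x y] = [set y in F' | e x y].
    apply/setP => y; rewrite !inE; case yG : (y \in G); rewrite ?orbF //.
    have := Gsep y x yG (subsetP F'S1 x xF); rewrite esym => /negbTE ->.
    by rewrite !andbF.
  exact: dF'.
have -> : [set y in F' :|: G | e x y] = [set y in G | e x y].
  apply/setP => y; rewrite !inE; case yF : (y \in F') => //=.
  by rewrite (negbTE (Gsep x y xG (subsetP F'S1 y yF))) andbF.
exact: Gdiss.
Qed.

Lemma dissociation_restrict (S S1 F : {set T}) :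
  dissociation e S F -> dissociation e S1 (F :&: S1).
Proof.
move=> /andP[FS /forall_inP dF]; rewrite /dissociation subsetIr.
apply/forall_inP => x; rewrite in_setI => /andP[xF _].
apply: leq_trans (dF x xF); apply: subset_leq_card; apply/subsetP => y.
by rewrite !inE => /andP[/andP[-> _] ->].
Qed.

(* Then F |-> F ∪ G and F |-> F ∩ S1 map maximum
   dissociation sets of G[S1] and G[S] to each other, so S and S1 are
   root-equivalent. *)
Lemma root_equiv_exchange (S S1 G : {set T}) : S1 \subset S -> v \in S1 ->
  G \subset S :\: S1 ->
  (forall F, dissociation e S F -> #|F :\: S1| <= #|G|) ->
  (forall x, x \in G -> #|[set y in G | e x y]| <= 1) ->
  (forall x y, x \in G -> y \in S1 -> ~~ e x y) ->
  root_equiv e v S S1.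
Proof.
move=> S1S vS1 GS Gbig Gdiss Gsep.
have GS1 y : y \in G -> y \notin S1.
  by move/(subsetP GS); rewrite in_setD => /andP[].
have diss_ext F' : dissociation e S1 F' -> dissociation e S (F' :|: G).
  by apply: dissociation_union; rewrite ?(subset_trans GS (subsetDl _ _)).
have card_ext (F' : {set T}) : F' \subset S1 -> #|F' :|: G| = #|F'| + #|G|.
  move=> F'S1; rewrite cardsU.
  suff -> : F' :&: G = set0 by rewrite cards0 subn0.
  apply/setP => y; rewrite !inE; apply/negP => /andP[yF yG].
  by move: (GS1 y yG); rewrite (subsetP F'S1 y yF).
split.
  move=> Fb [dFb maxFb]; exists (Fb :|: G); split; first split.
  - exact: diss_ext.
  - move=> F' dF'; rewrite card_ext; last by case/andP: dFb.
    rewrite -(cardsID S1 F'); apply: leq_add; last exact: Gbig.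
    exact: maxFb (dissociation_restrict _ dF').
  - rewrite in_setU; split => [/orP[]//|->//].
    by move/GS1; rewrite vS1.
move=> F [dF maxF]; exists (F :&: S1); split; first split.
- exact: dissociation_restrict dF.
- move=> F' dF'; have := maxF _ (diss_ext _ dF'); rewrite card_ext; last by case/andP: dF'.
  by rewrite -(cardsID S1 F) => h; have := Gbig F dF; lia.
- by rewrite in_setI vS1 andbT.
Qed.

End Exchange.

Section Descendants.
Variables (T : finType) (e : rel T) (v : T).
Hypothesis esym : symmetric e.
Hypothesis eirr : irreflexive e.
Hypothesis eacyc : acyclic_in e [set: T].
Variable S : {set T}.
Hypothesis vS : v \in S.
Hypothesis Sconn : forall x, x \in S -> connect (adj e S) v x.

Local Notation D := (desc e S v).

Lemma in_desc y x :
  (y \in D x) = (y \in S) && ~~ ((v \in S :\ x) && connect (adj e (S :\ x)) v y).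
Proof. by rewrite inE. Qed.

Lemma desc_sub x y : y \in D x -> y \in S.
Proof. by rewrite in_desc => /andP[]. Qed.

Lemma desc_self x : x \in S -> x \in D x.
Proof.
move=> xS; rewrite in_desc xS /=; apply/negP => /andP[vx /connectP[p pp lp]].
have vnx : v != x by move: vx; rewrite !inE => /andP[].
have pn : p != [::] by apply: contra vnx => /eqP pn; rewrite lp pn.
by have := last_path_in pp pn; rewrite -lp !inE eqxx.
Qed.

Lemma notin_desc x y : v \in S :\ x -> connect (adj e (S :\ x)) v y -> y \notin D x.
Proof. by move=> vx c; rewrite in_desc vx c andbF. Qed.

Lemma notin_desc_connect x y : y \in S -> y \notin D x ->
  (v \in S :\ x) /\ connect (adj e (S :\ x)) v y.
Proof. by move=> yS; rewrite in_desc yS /= negbK => /andP[? ?]; split. Qed.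

Lemma root_notin_desc x : x != v -> v \notin D x.
Proof. by move=> xv; apply: notin_desc; rewrite ?connect0 // !inE eq_sym xv vS. Qed.

Lemma desc_edge x y z : y \in D x -> z \in S -> z \notin D x -> e y z -> y = x.
Proof.
move=> yD zS /(notin_desc_connect zS) [vx cz] eyz; apply/eqP/negPn/negP => yx.
have yS := desc_sub yD.
suff : y \notin D x by rewrite yD.
apply: notin_desc => //; apply: (connect_trans cz); apply: connect1.
by rewrite /adj (connect_in vx cz) !inE yx yS esym eyz.
Qed.

Lemma root_upath x : x \in S ->
  exists p, [/\ path (adj e S) v p, last v p = x & uniq (v :: p)].
Proof. by move=> /Sconn /connectP [p pp ->]; case: (shortenP pp) => q qp uq _; exists q. Qed.

Lemma parent_ex x : x \in S -> x != v -> exists p, [/\ p \in S, p \notin D x & e x p].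
Proof.
move=> xS xv; have [p [pp lp up]] := root_upath xS.
have vx : v != x by rewrite eq_sym.
have [q qS /andP[cq eqx]] := path_last_step vS pp up lp vx.
exists q; split => //; last by rewrite esym.
by apply: notin_desc cq; rewrite !inE eq_sym xv vS.
Qed.

Lemma parent_uniq x p1 p2 : p1 \in S -> p2 \in S -> p1 \notin D x -> p2 \notin D x ->
  e x p1 -> e x p2 -> p1 = p2.
Proof.
move=> p1S p2S /(notin_desc_connect p1S) [vx c1] /(notin_desc_connect p2S) [_ c2] e1 e2.
apply/eqP/negPn/negP => p12.
have : connect (adj e (S :\ x)) p1 p2.
  by apply: (connect_trans _ c2); rewrite (sym_connect_sym (adj_sym esym (S :\ x))).
case/connectP => q qp; case: (shortenP qp) => q' qp' uq' _ lq'.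
have p1x : p1 \in S :\ x by rewrite !inE p1S eq_sym (edge_neq eirr e1).
have xq : x \notin p1 :: q'.
  by apply/negP => /(allP (path_in p1x qp')); rewrite !inE eqxx.
have q'n : q' != [::] by apply: contra p12 => /eqP qn; rewrite lq' qn.
have U : uniq (x :: p1 :: q') by rewrite cons_uniq xq uq'.
have sz : 2 < size (x :: p1 :: q') by case: q' q'n {qp' uq' lq' xq U}.
move/negP: (eacyc U sz (fun _ _ => in_setT _)); apply.
by rewrite /= e1 /= rcons_path (path_edges qp') /= -lq' esym e2.
Qed.

Lemma desc_of_parent x p : x \in S -> x != v -> p \in S -> p \notin D x -> e x p ->
  x \in D p.
Proof.
move=> xS xv pS pnD exp; rewrite in_desc xS /=; apply/negP => /andP[vp /connectP[q qp lq]].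
case: (shortenP qp) lq => q' qp' uq' _ lq'.
have vx : v != x by rewrite eq_sym.
have [r rA /andP[cr erx]] := path_last_step vp qp' uq' (Logic.eq_sym lq') vx.
have rS : r \in S by move: rA; rewrite !inE => /andP[].
have rD : r \notin D x.
  apply: notin_desc; first by rewrite !inE eq_sym xv vS.
  apply: connect_sub cr => a b ab; apply: connect1.
  move: ab => /and3P[aA bA eab]; rewrite /adj eab andbT.
  by move: aA bA; rewrite !inE => /and3P[-> _ ->] /and3P[-> _ ->].
have rp : r = p by apply: (parent_uniq rS pS rD pnD) => //; rewrite esym.
by move: rA; rewrite rp !inE eqxx.
Qed.

Lemma desc_mono c x : c \in D x -> c != x -> {subset D c <= D x}.
Proof.
move=> cD cx y yD; rewrite in_desc (desc_sub yD) /=.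
apply/negP => /andP[vx /connectP[P pP lP]].
have cv : c != v.
  apply: contraTneq cD => ->; apply: root_notin_desc.
  by move: vx; rewrite !inE eq_sym => /andP[].
case cP : (c \in v :: P).
  move: cP; rewrite inE (negbTE cv) /= => cP.
  case/splitPr: cP pP lP => P1 P2; rewrite cat_path => /andP[pP1 /= /andP[ec _]] _.
  have cc : connect (adj e (S :\ x)) v c.
    by apply/connectP; exists (rcons P1 c); rewrite ?last_rcons // rcons_path pP1.
  by move: cD; rewrite in_desc vx cc andbF.
suff : y \notin D c by rewrite yD.
apply: notin_desc; first by rewrite !inE eq_sym cv vS.
apply/connectP; exists P => //; apply: path_avoid; [exact: vS | by rewrite cP |].
by apply: path_adj_mono pP => z; rewrite !inE => /andP[].
Qed.

Lemma desc_antisym a b : a \in D b -> a != b -> b \in S -> b \notin D a.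
Proof.
move=> aD ab bS.
have av : a != v.
  by apply: contraTneq aD => av; subst a; apply: root_notin_desc; rewrite eq_sym.
case bv : (b == v); first by move/eqP: bv => ->; apply: root_notin_desc.
have [P [pP lP uP]] := root_upath bS.
case aP : (a \in P); last first.
  apply: notin_desc; first by rewrite !inE eq_sym av vS.
  by apply/connectP; exists P => //; apply: path_avoid => //; rewrite inE (negbTE av) aP.
exfalso; case/splitPr: aP pP lP uP => P1 P2 pP lP uP.
have bP2 : b \in P2.
  move: lP; rewrite last_cat /= => lP.
  have : b \in a :: P2 by rewrite -lP mem_last.
  by rewrite inE eq_sym (negbTE ab).
have bP1 : b \notin v :: rcons P1 a.
  move: uP; rewrite -cat_cons -cat_rcons cat_uniq => /and3P[_ /hasPn H _].
  by apply: H.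
have pr : path (adj e S) v (rcons P1 a) by move: pP; rewrite -cat_rcons cat_path => /andP[].
suff : a \notin D b by rewrite aD.
apply: notin_desc; first by rewrite !inE eq_sym bv vS.
by apply/connectP; exists (rcons P1 a); rewrite ?last_rcons //; apply: path_avoid.
Qed.

(* Going up to the parent strictly decreases #|S :\: D[x]|, so this quantity
   is a measure for induction from the root downwards. *)
Lemma parent_step y : y \in S -> y != v -> exists p,
  [/\ p \in S, p \notin D y, e y p, y \in D p & #|S :\: D p| < #|S :\: D y|].
Proof.
move=> yS yv; have [p [pS pD ep]] := parent_ex yS yv.
have yDp := desc_of_parent yS yv pS pD ep.
exists p; split => //; apply: proper_card; apply/properP; split.
  apply/subsetP => z; rewrite !in_setD => /andP[zD ->]; rewrite andbT.
  by apply: contra zD; apply: (desc_mono yDp (edge_neq eirr ep)).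
by exists p; rewrite !in_setD ?pS ?pD // desc_self.
Qed.

Lemma desc_rank_ind (P : T -> Prop) :
  (forall y, y \in S -> (forall z, z \in S -> #|S :\: D z| < #|S :\: D y| -> P z) -> P y) ->
  forall y, y \in S -> P y.
Proof.
move=> H y; elim: {y}_.+1 {-2}y (ltnSn #|S :\: D y|) => // n IH y lt yS.
by apply: H => // z zS lz; apply: IH => //; apply: leq_trans lz _.
Qed.

Lemma below_child a y : a \in S -> y \in D a -> y != a ->
  exists2 c, (c \in D a) && e a c & y \in D c.
Proof.
move=> aS yD ya; have yS := desc_sub yD; move: y yS yD ya; apply: desc_rank_ind => y yS IH yD ya.
have yv : y != v.
  by apply: contraTneq yD => yv; subst y; apply: root_notin_desc; rewrite eq_sym.
have [p [pS pD ep yDp lt]] := parent_step yS yv.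
have pDa : p \in D a.
  by apply/negPn/negP => pnD; move/eqP: ya; apply; apply: desc_edge yD pS pnD ep.
case pa : (p == a).
  by move/eqP: pa => pa; subst p; exists y; rewrite ?desc_self // yD esym.
have [c /andP[cD ec] pDc] := IH p pS lt pDa (negbT pa).
exists c; first by rewrite cD ec.
case pc : (p == c); first by move/eqP: pc => <-.
exact: (desc_mono pDc (negbT pc)).
Qed.

Lemma children_disjoint a c1 c2 y : a \in S -> c1 \in D a -> c2 \in D a ->
  e a c1 -> e a c2 -> c1 != c2 -> y \in D c1 -> y \in D c2 -> False.
Proof.
move=> aS c1D c2D e1 e2 c12.
have c1a : c1 != a by rewrite eq_sym (edge_neq eirr e1).
have c2a : c2 != a by rewrite eq_sym (edge_neq eirr e2).
have aD1 := desc_antisym c1D c1a aS.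
have aD2 := desc_antisym c2D c2a aS.
have c1D2 : c1 \notin D c2.
  by apply/negP => h; move/eqP: c12; apply; apply: desc_edge h aS aD2 _; rewrite esym.
have c2D1 : c2 \notin D c1.
  by apply/negP => h; move/eqP: c12; apply; symmetry; apply: desc_edge h aS aD1 _; rewrite esym.
have c1v : c1 != v.
  by apply: contraTneq c1D => c1v; subst c1; apply: root_notin_desc; rewrite eq_sym.
move=> yD1; have yS := desc_sub yD1; move: y yS yD1; apply: desc_rank_ind => y yS IH yD1 yD2.
have yv : y != v by apply: contraTneq yD1 => ->; apply: root_notin_desc.
have [p [pS pD ep yDp lt]] := parent_step yS yv.
apply: (IH p pS lt).
  apply/negPn/negP => pn; have yc := desc_edge yD1 pS pn ep; subst y.
  by rewrite yD2 in c1D2.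
apply/negPn/negP => pn; have yc := desc_edge yD2 pS pn ep; subst y.
by rewrite yD1 in c2D1.
Qed.

Lemma child_unique x c1 c2 : x \in S -> x != v -> deg e S x <= 2 ->
  c1 \in D x -> c2 \in D x -> e x c1 -> e x c2 -> c1 = c2.
Proof.
move=> xS xv dg c1D c2D e1 e2; apply/eqP/negPn/negP => c12.
have [p [pS pD ep]] := parent_ex xS xv.
have pc1 : p != c1 by apply: contraNneq pD => ->.
have pc2 : p != c2 by apply: contraNneq pD => ->.
have : #|[set p; c1; c2]| <= deg e S x.
  apply: subset_leq_card; apply/subsetP => z; rewrite !inE => /orP[/orP[]|] /eqP ->.
  - by rewrite pS ep.
  - by rewrite (desc_sub c1D) e1.
  - by rewrite (desc_sub c2D) e2.
by rewrite card3 // => /leq_trans /(_ dg).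
Qed.

Lemma pendant_path x : x \in S -> x != v -> (forall y, y \in D x -> deg e S y <= 2) ->
  exists t, [/\ uniq (x :: t), path e x t, x :: t =i D x & chordless e (x :: t)].
Proof.
elim: {x}_.+1 {-2}x (ltnSn #|D x|) => // n IH x lt xS xv dg.
have dgx := dg x (desc_self xS).
case: (pickP [pred c | (c \in D x) && e x c]) => [c /andP[cD ec] | none]; last first.
  exists [::]; split => // y; rewrite inE; apply/idP/idP; first by move/eqP ->; apply: desc_self.
  move=> yD; apply/negPn/negP => yx.
  by have [c' /andP[c'D ec'] _] := below_child xS yD yx; have := none c'; rewrite /= c'D ec'.
have cS := desc_sub cD.
have cx : c != x by rewrite eq_sym (edge_neq eirr ec).
have cv : c != v by apply: contraTneq cD => ->; apply: root_notin_desc.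
have xDc := desc_antisym cD cx xS.
have mono := desc_mono cD cx.
have ltc : #|D c| < #|D x|.
  apply: proper_card; apply/properP; split; first by apply/subsetP.
  by exists x; rewrite ?desc_self.
have [t [ut pt mt it]] := IH c (leq_trans ltc lt) cS cv (fun y yD => dg y (mono y yD)).
exists (c :: t); split.
- by rewrite cons_uniq mt xDc ut.
- by rewrite /= ec pt.
- move=> y; rewrite inE mt; apply/idP/idP.
    by case/orP => [/eqP -> | /mono]; rewrite ?desc_self.
  move=> yD; case yx : (y == x) => //=.
  have [c' /andP[c'D ec'] yDc'] := below_child xS yD (negbT yx).
  by rewrite (child_unique xS xv dgx cD c'D ec ec').
- split => //= y; rewrite mt => yD exy.
  by apply: (desc_edge yD xS xDc); rewrite esym.
Qed.

Lemma dist_ex x : x \in S -> exists n, is_dist e S v x n.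
Proof.
move=> xS.
pose P n := [exists t : n.-tuple T, path (adj e S) v t && (last v t == x)].
have exP : exists n, P n.
  have /connectP [p pp lp] := Sconn xS.
  by exists (size p); apply/existsP; exists (in_tuple p); rewrite /= pp -lp eqxx.
case: (ex_minnP exP) => m /existsP [t /andP[pt /eqP lt]] mmin.
exists m; split; first by exists t; rewrite size_tuple.
move=> p pp lp; apply: mmin; apply/existsP; exists (in_tuple p); by rewrite /= pp lp eqxx.
Qed.

Lemma remove_subtrees_connected (W : {set T}) (X := \bigcup_(w in W) D w) : v \notin X ->
  v \in S :\: X /\ (forall x, x \in S :\: X -> connect (adj e (S :\: X)) v x).
Proof.
move=> vX; have vSX : v \in S :\: X by rewrite in_setD vX vS.
split => // x xSX; have xS : x \in S by move: xSX; rewrite in_setD => /andP[].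
move: x xS xSX; apply: desc_rank_ind => y yS IH ySX.
case yv : (y == v); first by move/eqP: yv => ->; apply: connect0.
have [p [pS pD ep yDp lt]] := parent_step yS (negbT yv).
have yX : y \notin X by move: ySX; rewrite in_setD => /andP[].
have pX : p \notin X.
  apply/negP => /bigcupP [w wW pDw].
  have yDw : y \notin D w by apply: contra yX => yw; apply/bigcupP; exists w.
  have pw : p = w by apply: (desc_edge pDw yS yDw); rewrite esym.
  by move: yDw; rewrite -pw yDp.
have pSX : p \in S :\: X by rewrite in_setD pX pS.
apply: (connect_trans (IH p pS lt pSX)); apply: connect1.
by rewrite /adj pSX ySX esym ep.
Qed.

(* One pruning at a branch vertex u != v of maximum distance from v.  All
   proper descendants of u have degree at most 2, so each T_w, w in C(u), is a
   pendant path of #|D[w]| vertices. *)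
Section PruningStep.
Variable u : T.
Hypothesis u_branch : branch e S u.
Hypothesis uv : u != v.
Hypothesis u_farthest : forall w n m, branch e S w -> w != v ->
  is_dist e S v w n -> is_dist e S v u m -> n <= m.

Local Notation C := (children e S v u).

Lemma u_in_S : u \in S.
Proof. by case/andP: u_branch. Qed.

Lemma in_children w : (w \in C) = (w \in D u) && (e u w && (w != u)).
Proof. by rewrite inE. Qed.

Lemma in_Cmod w i : (w \in Cmod e S v u i) = (w \in C) && (#|D w| %% 3 == i).
Proof. by rewrite inE. Qed.

(* A branch vertex below u would be farther from v than u. *)
Lemma below_u_nonbranch y : y \in D u -> y != u -> deg e S y <= 2.
Proof.
move=> yD yu; rewrite leqNgt; apply/negP => dy.
have yS := desc_sub yD.
have yv : y != v by apply: contraTneq yD => ->; apply: root_notin_desc.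
have br : branch e S y by rewrite /branch yS dy.
have [n hn] := dist_ex yS; have [m hm] := dist_ex u_in_S.
have nm := u_farthest br yv hn hm.
case: hn => [[p [pp lp sp]] _]; case: hm => [_ hm2].
have up : u \in p.
  apply/negPn/negP => un; suff : y \notin D u by rewrite yD.
  apply: notin_desc; first by rewrite !inE eq_sym uv vS.
  apply/connectP; exists p => //; apply: path_avoid => //.
  by rewrite inE negb_or uv un.
case/splitPr: up pp lp sp => p1 p2 pp lp sp.
have pu : path (adj e S) v (rcons p1 u) by move: pp; rewrite -cat_rcons cat_path => /andP[].
have := hm2 (rcons p1 u) pu; rewrite last_rcons size_rcons => /(_ erefl) h.
move: lp; rewrite last_cat /=; case: p2 pp sp => [|z p2] pp sp /=.
  by move=> yu'; rewrite yu' eqxx in yu.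
by move=> _; rewrite size_cat /= in sp; move: nm h; rewrite -sp; lia.
Qed.

Lemma child_props w : w \in C -> [/\ w \in D u, e u w, w \in S, w != u & w != v].
Proof.
rewrite in_children => /and3P[wD ew wu].
have wv : w != v by apply: contraTneq wD => ->; apply: root_notin_desc.
by split; rewrite // (desc_sub wD).
Qed.

Lemma child_subtree w : w \in C ->
  [/\ u \notin D w, {subset D w <= D u} & forall y, y \in D w -> deg e S y <= 2].
Proof.
move=> wC; have [wD ew wS wu wv] := child_props wC.
have uD := desc_antisym wD wu u_in_S.
split => // [|y yD]; first exact: desc_mono wD wu.
by apply: below_u_nonbranch; [apply: desc_mono wD wu _ yD | apply: contraNneq uD => <-].
Qed.

Lemma child_path w : w \in C -> exists t,
  [/\ uniq (w :: t), path e w t, w :: t =i D w & chordless e (w :: t)].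
Proof.
move=> wC; have [_ _ wS _ wv] := child_props wC; have [_ _ dg] := child_subtree wC.
exact: pendant_path.
Qed.

Lemma children_disj w1 w2 y : w1 \in C -> w2 \in C -> w1 != w2 ->
  y \in D w1 -> y \in D w2 -> False.
Proof.
move=> w1C w2C; have [w1D e1 _ _ _] := child_props w1C; have [w2D e2 _ _ _] := child_props w2C.
exact: (children_disjoint u_in_S w1D w2D e1 e2).
Qed.

Lemma child_bound w F : w \in C -> dissociation e S F ->
  #|F :&: D w| <= path_diss #|D w|.
Proof.
move=> wC dF; have [t [U pt mt _]] := child_path wC.
rewrite (card_enumI F U mt) (card_enum U mt).
exact: (@path_count_bound _ _ esym (mem F) _ U pt (dissociation_cherry dF)).
Qed.

(* ... and in one vertex fewer if u is in F and #|D[w]| = 2 mod 3 (apply the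
   path bound to the path u :: T_w) ... *)
Lemma child_bound_mod2 w F : w \in C -> #|D w| %% 3 = 2 -> dissociation e S F ->
  u \in F -> 1 + #|F :&: D w| <= path_diss #|D w|.
Proof.
move=> wC n2 dF uF; have [t [U pt mt _]] := child_path wC.
have [_ ew _ _ _] := child_props wC; have [uD _ _] := child_subtree wC.
have U' : uniq (u :: w :: t) by rewrite cons_uniq mt uD U.
have := @path_count_bound _ _ esym (mem F) _ U' _ (dissociation_cherry dF).
rewrite /= ew pt => /(_ isT).
rewrite (card_enumI F U mt) (card_enum U mt) in n2 *.
rewrite uF /path_diss /= => h; move: n2 h; clear => /=.
by move: (w \in F : nat) (count (mem F) t) (size t) => b a k; lia.
Qed.

(* ... or if w is not in F and #|D[w]| = 1 mod 3 (apply it to T_w - w). *)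
Lemma child_bound_mod1 w F : w \in C -> #|D w| %% 3 = 1 -> dissociation e S F ->
  w \notin F -> 1 + #|F :&: D w| <= path_diss #|D w|.
Proof.
move=> wC n1 dF wF; have [t [U pt mt _]] := child_path wC.
rewrite (card_enumI F U mt) (card_enum U mt) in n1 *.
have Ut : uniq t by case/andP: U.
have := @path_count_bound _ _ esym (mem F) _ Ut (path_sorted pt) (dissociation_cherry dF).
rewrite /= (negbTE wF) /path_diss /= => h; move: n1 h; clear => /=.
by move: (count (mem F) t) (size t) => a k; lia.
Qed.

Definition optimal_in w (G : {set T}) : bool :=
  [&& G \subset D w, #|G| == path_diss #|D w|,
      [forall x in G, #|[set y in G | e x y]| <= 1] & (#|D w| %% 3 == 0) ==> (w \notin G)].

Lemma optimal_ex w : w \in C -> exists G, optimal_in w G.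
Proof.
move=> wC; have [t [U pt mt it]] := child_path wC.
exists [set y | y \in pattern (w :: t)].
have cG : #|[set y | y \in pattern (w :: t)]| = size (pattern (w :: t)).
  by apply: card_enum (pattern_uniq U) _ => y; rewrite inE.
apply/and4P; split.
- by apply/subsetP => y; rewrite inE => /pattern_sub; rewrite mt.
- by rewrite cG size_pattern -(card_enum U mt).
- apply/forall_inP => x; rewrite inE => xP; apply/card_le1_eqP => a b.
  rewrite !inE => /andP[aP ea] /andP[bP eb]; apply/eqP/negPn/negP => ab.
  exact: (pattern_no_cherry esym eirr U it xP bP aP ab eb ea).
- apply/implyP => /eqP n0; apply/negP; rewrite inE => wP.
  by have := pattern_head U wP; rewrite -(card_enum U mt) n0.
Qed.

Definition opt w : {set T} := odflt set0 [pick G : {set T} | optimal_in w G].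

Lemma opt_optimal w : w \in C -> optimal_in w (opt w).
Proof.
move=> wC; rewrite /opt; case: pickP => [G gG | none] //=.
by have [G gG] := optimal_ex wC; have := none G; rewrite gG.
Qed.

Lemma opt_sub w : w \in C -> {subset opt w <= D w}.
Proof. by move/opt_optimal => /and4P[/subsetP h _ _ _]. Qed.

Definition opt_union (W : {set T}) : {set T} := \bigcup_(w in W) opt w.

Section OptUnion.
Variable W : {set T}.
Hypothesis WC : W \subset C.

Lemma opt_unionP x : reflect (exists2 w, w \in W & x \in opt w) (x \in opt_union W).
Proof. exact: bigcupP. Qed.

Lemma opt_union_card : #|opt_union W| = \sum_(w in W) path_diss #|D w|.
Proof.
have disjW w1 w2 y : w1 \in W -> w2 \in W -> w1 != w2 -> y \in D w1 -> y \in D w2 -> False.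
  by move=> w1W w2W; apply: children_disj (subsetP WC _ w1W) (subsetP WC _ w2W).
rewrite (@card_cover_sum _ D W (opt_union W)) => //; last first.
  by move=> y /opt_unionP [w wW yG]; exists w => //; apply: opt_sub (subsetP WC _ wW) _ yG.
apply: eq_bigr => w wW; have wC := subsetP WC w wW.
have -> : opt_union W :&: D w = opt w.
  apply/setP => y; rewrite in_setI; apply/andP/idP => [[/opt_unionP [w' w'W yG] yD]|yG].
    case ww : (w' == w); first by move/eqP: ww yG => ->.
    by exfalso; apply: (disjW w' w y) => //; [rewrite ww | apply: opt_sub (subsetP WC _ w'W) _ yG].
  by split; [apply/opt_unionP; exists w | apply: opt_sub].
by have /and4P[_ /eqP -> _ _] := opt_optimal wC.
Qed.

(* The union of the optimal sets is a dissociation set: an edge between T_w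
   and T_w' would pass through their common parent u. *)
Lemma opt_union_diss x : x \in opt_union W -> #|[set y in opt_union W | e x y]| <= 1.
Proof.
move=> /opt_unionP [w wW xG]; have wC := subsetP WC w wW.
have /and4P[_ _ /forall_inP dG _] := opt_optimal wC.
apply: leq_trans (dG x xG); apply: subset_leq_card; apply/subsetP => y.
rewrite !inE => /andP[/opt_unionP [w' w'W yG'] exy]; rewrite exy andbT.
have w'C := subsetP WC w' w'W.
case ww : (w' == w); first by move/eqP: ww yG' => <-.
exfalso.
have yD' := opt_sub w'C yG'; have xD := opt_sub wC xG.
have yDw : y \notin D w by apply/negP => yD; apply: (children_disj w'C wC (negbT ww) yD' yD).
have yS := desc_sub yD'.
have xw := desc_edge xD yS yDw exy; subst x.
have [_ ew _ _ _] := child_props wC; have [uD _ _] := child_subtree wC.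
have ewu : e w u by rewrite esym.
have yu := parent_uniq yS u_in_S yDw uD exy ewu.
by have [+ _ _] := child_subtree w'C; rewrite -yu yD'.
Qed.

End OptUnion.

Lemma card_below_u (F : {set T}) :
  #|F :&: (D u :\ u)| = \sum_(w in C) #|F :&: D w|.
Proof.
rewrite (@card_cover_sum _ D C); last 2 first.
- by move=> w1 w2 y; apply: children_disj.
- move=> y; rewrite !in_setI in_setD1 => /and3P[_ yu yD].
  have [c /andP[cD ec] yc] := below_child u_in_S yD yu.
  by exists c => //; rewrite in_children cD ec eq_sym (edge_neq eirr ec).
apply: eq_bigr => w wC; apply: eq_card => y; rewrite !in_setI in_setD1.
case yD : (y \in D w); rewrite ?andbF //= andbT.
have [uD sub _] := child_subtree wC.
by rewrite (sub y yD) andbT; case: (y \in F) => //=; apply: contraNneq uD => <-.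
Qed.

(* When the whole of D[u] is deleted, a dissociation set containing u loses
   one vertex on some child path: either on a child in C^2(u), or on one of
   two children in C^1(u), at most one of which is in F. *)
Lemma gain_at_u F : (0 < #|Cmod e S v u 2|) || (1 < #|Cmod e S v u 1|) ->
  dissociation e S F -> u \in F ->
  1 + \sum_(w in C) #|F :&: D w| <= \sum_(w in C) path_diss #|D w|.
Proof.
move=> cond dF uF; have bound w : w \in C -> #|F :&: D w| <= path_diss #|D w|.
  by move=> wC; apply: child_bound.
case/orP: cond => [/card_gt0P [w0] | /card_gt1P [w1 [w2 [w1C1 w2C1 w12]]]].
  rewrite in_Cmod => /andP[w0C /eqP r].
  by apply: (sum_gain w0C) => //; apply: child_bound_mod2.
move: w1C1 w2C1; rewrite !in_Cmod => /andP[w1C /eqP r1] /andP[w2C /eqP r2].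
have [_ e1 _ _ _] := child_props w1C; have [_ e2 _ _ _] := child_props w2C.
case w1F : (w1 \in F); last first.
  by apply: (sum_gain w1C) => //; apply: child_bound_mod1; rewrite ?w1F.
case w2F : (w2 \in F).
  by exfalso; apply: (dissociation_cherry dF uF w1F w2F w12 e1 e2).
by apply: (sum_gain w2C) => //; apply: child_bound_mod1; rewrite ?w2F.
Qed.

Lemma full_prune_bound F : (0 < #|Cmod e S v u 2|) || (1 < #|Cmod e S v u 1|) ->
  dissociation e S F -> #|F :\: (S :\: D u)| <= \sum_(w in C) path_diss #|D w|.
Proof.
move=> cond dF; have FS : F \subset S by case/andP: dF.
have -> : F :\: (S :\: D u) = F :&: D u.
  apply/setP => y; rewrite !in_setD in_setI andbC.
  by case yF : (y \in F); rewrite //= (subsetP FS y yF) andbT negbK.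
rewrite (cardsD1 u) -setIDA card_below_u in_setI.
case uF : (u \in F) => /=; last by apply: leq_sum => w wC; apply: child_bound.
by rewrite (desc_self u_in_S); apply: gain_at_u.
Qed.

Lemma partial_prune_bound (W : {set T}) F : W \subset C -> dissociation e S F ->
  #|F :\: (S :\: \bigcup_(w in W) D w)| <= \sum_(w in W) path_diss #|D w|.
Proof.
move=> WC dF; have FS : F \subset S by case/andP: dF.
rewrite (@card_cover_sum _ D W); first last.
- move=> y; rewrite !in_setD negb_and negbK => /andP[/orP[/bigcupP [w wW yD]|yS] yF].
    by exists w.
  by rewrite (subsetP FS y yF) in yS.
- by move=> w1 w2 y w1W w2W; apply: children_disj (subsetP WC _ w1W) (subsetP WC _ w2W).
apply: leq_sum => w wW; apply: leq_trans (child_bound (subsetP WC w wW) dF).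
by apply: subset_leq_card; apply/subsetP => y; rewrite !in_setI in_setD => /andP[/andP[_ ->] ->].
Qed.

Lemma full_prune_equiv : (0 < #|Cmod e S v u 2|) || (1 < #|Cmod e S v u 1|) ->
  root_equiv e v S (S :\: D u).
Proof.
move=> cond; apply: (root_equiv_exchange esym (G := opt_union C)).
- exact: subsetDl.
- by rewrite in_setD root_notin_desc.
- apply/subsetP => x /opt_unionP [w wC xG].
  have [_ sub _] := child_subtree wC; have xDu := sub x (opt_sub wC xG).
  by rewrite !in_setD xDu (desc_sub xDu).
- by move=> F dF; rewrite opt_union_card //; apply: full_prune_bound.
- exact: opt_union_diss.
- move=> x y /opt_unionP [w wC xG]; rewrite in_setD => /andP[yDu yS].
  apply/negP => exy; have xD := opt_sub wC xG; have [uD sub _] := child_subtree wC.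
  have xu := desc_edge (sub x xD) yS yDu exy; subst x.
  by rewrite xD in uD.
Qed.

Lemma kept_children_mod0 z w : ~~ ((0 < #|Cmod e S v u 2|) || (1 < #|Cmod e S v u 1|)) ->
  (Cmod e S v u 1 = [set z] \/ Cmod e S v u 1 = set0) -> w \in C :\ z -> #|D w| %% 3 = 0.
Proof.
rewrite negb_or -leqNgt leqn0 cards_eq0 => /andP[/eqP C2 _] hz.
rewrite in_setD1 => /andP[wz wC].
have : #|D w| %% 3 < 3 by apply: ltn_pmod.
case r : (#|D w| %% 3) => [|[|[|]]] // _.
  have : w \in Cmod e S v u 1 by rewrite in_Cmod wC r.
  by case: hz => ->; rewrite !inE // (negbTE wz).
have : w \in Cmod e S v u 2 by rewrite in_Cmod wC r.
by rewrite C2 inE.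
Qed.

(* ... so its optimal set avoids w, the only vertex of T_w with a neighbour
   outside it. *)
Lemma partial_prune_equiv z : z \in C ->
  ~~ ((0 < #|Cmod e S v u 2|) || (1 < #|Cmod e S v u 1|)) ->
  (Cmod e S v u 1 = [set z] \/ Cmod e S v u 1 = set0) ->
  root_equiv e v S (S :\: \bigcup_(w in C :\ z) D w).
Proof.
move=> zC cond hz; have WC : C :\ z \subset C by apply: subsetDl.
apply: (root_equiv_exchange esym (G := opt_union (C :\ z))).
- exact: subsetDl.
- rewrite in_setD vS andbT; apply/negP => /bigcupP [w /(subsetP WC) wC].
  by have [_ _ _ _ wv] := child_props wC; apply/negP; apply: root_notin_desc.
- apply/subsetP => x /opt_unionP [w wW xG].
  have xD := opt_sub (subsetP WC w wW) xG.
  by rewrite !in_setD (desc_sub xD) !andbT negbK; apply/bigcupP; exists w.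
- by move=> F dF; rewrite opt_union_card //; apply: partial_prune_bound.
- exact: opt_union_diss.
- move=> x y /opt_unionP [w wW xG]; rewrite in_setD => /andP[yX yS].
  apply/negP => exy; have wC := subsetP WC w wW; have xD := opt_sub wC xG.
  have yDw : y \notin D w by apply: contra yX => yD; apply/bigcupP; exists w.
  have xw := desc_edge xD yS yDw exy; subst x.
  have /and4P[_ _ _ /implyP wG] := opt_optimal wC.
  by move: (wG (introT eqP (kept_children_mod0 cond hz wW))); rewrite xG.
Qed.

Lemma prune_at_equiv S1 : prune_at e S v u S1 ->
  (v \in S1 /\ forall x, x \in S1 -> connect (adj e S1) v x) /\ root_equiv e v S S1.
Proof.
rewrite /prune_at; case: ifP => cond.
  move=> ->; split; last exact: full_prune_equiv.
  have := @remove_subtrees_connected [set u]; rewrite big_set1; apply.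
  exact: root_notin_desc.
case=> z zC [hz ->]; split; last exact: partial_prune_equiv (negbT cond) hz.
apply: remove_subtrees_connected; apply/negP => /bigcupP [w].
rewrite in_setD1 => /andP[_ wC].
by have [_ _ _ _ wv] := child_props wC; apply/negP; apply: root_notin_desc.
Qed.

End PruningStep.

End Descendants.

Lemma pruning_root_equiv (T : finType) (e : rel T) (v : T) :
  symmetric e -> irreflexive e -> acyclic_in e [set: T] ->
  forall S Sb, pruning e v S Sb -> v \in S ->
  (forall x, x \in S -> connect (adj e S) v x) -> root_equiv e v S Sb.
Proof.
move=> esym eirr eacyc S Sb; elim => {S Sb} [S _ _ _ | S S1 S2 st _ IH vS Sc].
  exact: root_equiv_refl.
case: st => u [u_branch uv u_farthest pr].
have [[vS1 Sc1] E1] := prune_at_equiv esym eirr eacyc vS Sc u_branch uv u_farthest pr.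
exact: root_equiv_trans E1 (IH vS1 Sc1).
Qed.

Theorem lemma3p1 (T : finType) (e : rel T) (v : T) (Tbar : {set T}) :
  symmetric e -> irreflexive e ->
  is_tree e [set: T] ->
  pruning e v [set: T] Tbar ->
  (forall Fb, max_dissociation e Tbar Fb ->
     exists F, max_dissociation e [set: T] F /\ (v \in F <-> v \in Fb)) /\
  (forall F, max_dissociation e [set: T] F ->
     exists Fb, max_dissociation e Tbar Fb /\ (v \in Fb <-> v \in F)).
Proof.
move=> esym eirr [_ [conn acyc]] pr.
have vT : v \in [set: T] by rewrite inE.
exact: pruning_root_equiv esym eirr acyc _ _ pr vT (fun x xT => conn v x vT xT).
Qed.
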